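(* Let $D_n$ be the dumbbell graph on $2n$ nodes: the disjoint union of two complete graphs on $n$ nodes each (on $\{1,\dots,n\}$ and $\{n+1,\dots,2n\}$), together with the single additional edge $\{n,2n\}$. For every fixed $\epsilon\in(0,1)$, $t_{\epsilon,1}(D_n)=\Theta_\epsilon(n^3)$, i.e. there are constants $0<c_\epsilon\le C_\epsilon$ depending only on $\epsilon$ with $c_\epsilon n^3\le t_{\epsilon,1}(D_n)\le C_\epsilon n^3$.
   Context: The averaging process on a finite, undirected, connected graph $G=(V,E)$: the state vector $v(t)\in\mathbb R^{V}$, $t=0,1,2,\dots$, starts from a given $v(0)$; at each step $t\ge 1$ an edge $\{i,j\}\in E$ is chosen uniformly at random (independently of all previous choices) and both $v_i$ and $v_j$ are replaced by $(v_i+v_j)/2$, all other coordinates unchanged. $\bar v$ is the constant vector whose entries equal the mean of the entries of $v(0)$. $t_{\epsilon,1}(G)$ is the least $t\in\mathbb N$ such that for every $v(0)$ with $\|v(0)\|_1=1$ one has $\mathbb E\|v(t)-\bar v\|_1\le\epsilon$. *)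

From HB Require Import structures.
From mathcomp Require Import all_boot all_order all_algebra.
From mathcomp Require Import reals.
Set Implicit Arguments. Unset Strict Implicit. Unset Printing Implicit Defensive.
Import Order.TTheory GRing.Theory Num.Theory.
Local Open Scope ring_scope.

Section Averaging.
Variables (R : realType) (N : nat) (adj : rel 'I_N).

(* Edges of the (undirected, simple) graph given by the symmetric relation adj,
   each unordered edge {i,j} represented once as the pair (i,j) with i < j. *)
Definition edges : {set 'I_N * 'I_N} :=
  [set p : 'I_N * 'I_N | (val p.1 < val p.2)%N && adj p.1 p.2].

Definition avg_step (p : 'I_N * 'I_N) (v : 'I_N -> R) : 'I_N -> R :=
  fun k => if (k == p.1) || (k == p.2) then (v p.1 + v p.2) / 2 else v k.

(* Expectation of f (v(t)) when v(0) = v and at each step an edge is chosen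
   uniformly at random, independently (first step chosen, then recurse). *)
Fixpoint exp_after (t : nat) (f : ('I_N -> R) -> R) (v : 'I_N -> R) : R :=
  match t with
  | 0 => f v
  | t'.+1 => (#|edges|%:R)^-1 * \sum_(p in edges) exp_after t' f (avg_step p v)
  end.

Definition l1norm (v : 'I_N -> R) : R := \sum_k `|v k|.

Definition mean (v : 'I_N -> R) : R := (\sum_k v k) / N%:R.

Definition exp_l1_dist (t : nat) (v0 : 'I_N -> R) : R :=
  exp_after t (fun w => l1norm (fun k => w k - mean v0)) v0.

Definition eps_mixed (eps : R) (t : nat) : Prop :=
  forall v0 : 'I_N -> R, l1norm v0 = 1 -> exp_l1_dist t v0 <= eps.

Definition is_t_eps_1 (eps : R) (t : nat) : Prop :=
  eps_mixed eps t /\ forall s, eps_mixed eps s -> (t <= s)%N.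

End Averaging.

(* Dumbbell graph D_n on 2n nodes, 0-indexed: cliques on {0..n-1} and
   {n..2n-1}, plus the bridge edge {n-1, 2n-1}. *)
Definition dumbbell_adj (n : nat) : rel 'I_(n + n) :=
  fun i j => (i != j) &&
    [|| ((i < n)%N == (j < n)%N),
        (val i == n.-1) && (val j == (n + n).-1)
      | (val j == n.-1) && (val i == (n + n).-1)].
Arguments dumbbell_adj : clear implicits.

(* Let m = n (n - 1) + 1 be the number of edges of D_n, and D(w) the sum of
   (w_i - w_j)^2 over the edges. One averaging step along a uniformly random edge
   lowers Phi(w) = |w - mean|_2^2 by D(w) / (2 m) in expectation. On the dumbbell,
   D >= n Phi - 2 as long as |w - mean|_1 <= 2 (true initially and preserved), and
   D >= Phi / (3 n) always, since the gap between the means of the two cliques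
   has to be bridged by the single edge {n, 2n}. Hence 2 m steps bring Phi down to
   O(1/n), O(n m K) further steps divide it by K, and since pointwise
   |y| <= (n / eps) y^2 + eps / (4 n), the expected l1 distance is at most eps
   once K is of order eps^-2: this gives t = O(n^3).
   Conversely, start from 1/(2n) on one clique and -1/(2n) on the other. The
   difference of the two clique sums is 1, bounds the l1 distance to the mean 0,
   and changes, by at most 1/n, only when the bridge is chosen, which happens with
   probability 1/m; so at least (1 - eps) n m = Omega(n^3) steps are needed. *)

From mathcomp Require Import all_boot all_order all_algebra.
From mathcomp Require Import boolp reals ring lra.
Import Order.TTheory GRing.Theory Num.Theory.
Local Open Scope ring_scope.
Set Implicit Arguments. Unset Strict Implicit. Unset Printing Implicit Defensive.

Lemma expr1B_mulD_le1 (R : realFieldType) (x : R) k :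
  0 <= x <= 1 -> (1 - x) ^+ k * (1 + k%:R * x) <= 1.
Proof.
move=> /andP[x0 x1]; elim: k => [|k IH]; first by rewrite expr0 mul0r addr0 mulr1.
have pow_ge0 : 0 <= (1 - x) ^+ k by apply: exprn_ge0; lra.
rewrite exprSr -mulrA; apply: le_trans IH; apply: ler_wpM2l => //.
have k_ge0 : 0 <= (k%:R : R) by [].
rewrite -natr1; nra.
Qed.

Lemma norm_le_sqr (R : realFieldType) (a y : R) : 0 < a -> `|y| <= a * y ^+ 2 + (4 * a)^-1.
Proof.
move=> a0; rewrite -subr_ge0.
have -> : a * y ^+ 2 + (4 * a)^-1 - `|y| = (2 * a * `|y| - 1) ^+ 2 / (4 * a).
  by rewrite -[y ^+ 2]real_normK ?num_real //; field; lra.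
by apply: divr_ge0; [exact: sqr_ge0 | lra].
Qed.

Lemma sum_sqr_le_sqr_sum_norm (R : realDomainType) (I : finType) (y : I -> R) :
  \sum_i y i ^+ 2 <= (\sum_i `|y i|) ^+ 2.
Proof.
rewrite expr2 mulr_suml; apply: ler_sum => i _.
rewrite -real_normK ?num_real // expr2 ler_wpM2l //.
by rewrite (bigD1 i) //= lerDl sumr_ge0.
Qed.

Lemma sqr_sub_mean_le (R : realFieldType) n (a : 'I_n.+1 -> R) i :
  (a i - (\sum_j a j) / n.+1%:R) ^+ 2 <= \sum_j a j ^+ 2 - (\sum_j a j) ^+ 2 / n.+1%:R.
Proof.
set s := \sum_j a j; set mu := s / n.+1%:R.
have -> : \sum_j a j ^+ 2 - s ^+ 2 / n.+1%:R = \sum_j (a j - mu) ^+ 2.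
  rewrite [RHS](eq_bigr (fun j => a j ^+ 2 - (2 * mu * a j - mu ^+ 2))) => [|j _];
    last by ring.
  rewrite !sumrB sumr_const card_ord -mulr_sumr -/s /mu -mulr_natr.
  by field; rewrite addrC natr1 pnatr_eq0.
by rewrite (bigD1 i) //= lerDl sumr_ge0 // => j _; exact: sqr_ge0.
Qed.

Lemma sum_sum_sqr_sub (R : comPzRingType) n (a : 'I_n -> R) :
  \sum_i \sum_j (a i - a j) ^+ 2 = 2 * (n%:R * \sum_i a i ^+ 2 - (\sum_i a i) ^+ 2).
Proof.
have inner i : \sum_j (a i - a j) ^+ 2 =
    n%:R * a i ^+ 2 + \sum_j a j ^+ 2 - 2 * a i * \sum_j a j.
  rewrite (eq_bigr (fun j => a i ^+ 2 + (a j ^+ 2 - 2 * a i * a j))) => [|j _];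
    last by ring.
  by rewrite big_split /= sumrB sumr_const card_ord -mulr_sumr -mulr_natl; ring.
rewrite (eq_bigr _ (fun i _ => inner i)) sumrB big_split /= sumr_const card_ord.
by rewrite -mulr_sumr -mulr_natl -mulr_suml -mulr_sumr; ring.
Qed.

Section AveragingProcess.
Variables (R : realType) (N : nat) (adj : rel 'I_N).
Local Notation E := (edges adj).
Local Notation m := (#|edges adj|%:R : R).

Definition sqdist (c : R) (w : 'I_N -> R) : R := \sum_k (w k - c) ^+ 2.

Definition dirichlet (w : 'I_N -> R) : R := \sum_(p in E) (w p.1 - w p.2) ^+ 2.

Definition step_invariant (P : ('I_N -> R) -> Prop) : Prop :=
  forall p w, p \in E -> P w -> P (avg_step p w).

Lemma edge_neq p : p \in E -> p.1 != p.2.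
Proof. by rewrite inE => /andP[lt12 _]; apply/eqP => e; rewrite e ltnn in lt12. Qed.

Lemma sum_avg_step (G : 'I_N -> R -> R) p (w : 'I_N -> R) : p.1 != p.2 ->
  \sum_k G k (avg_step p w k) = \sum_k G k (w k) - G p.1 (w p.1) - G p.2 (w p.2)
    + G p.1 ((w p.1 + w p.2) / 2) + G p.2 ((w p.1 + w p.2) / 2).
Proof.
move=> ne12; have ne21 : p.2 != p.1 by rewrite eq_sym.
rewrite (bigD1 p.1) //= (bigD1 p.2) //= [in RHS](bigD1 p.1) //= [in RHS](bigD1 p.2) //=.
rewrite /avg_step !eqxx /= orbT.
under eq_bigr => i /andP[/negbTE-> /negbTE->] do rewrite /=.
by ring.
Qed.

Lemma sum_avg_step_id p (w : 'I_N -> R) : p \in E -> \sum_k avg_step p w k = \sum_k w k.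
Proof. by move/edge_neq/(sum_avg_step (fun _ x => x) w) ->; field. Qed.

Lemma sqdist_avg_step c p (w : 'I_N -> R) : p \in E ->
  sqdist c (avg_step p w) = sqdist c w - (w p.1 - w p.2) ^+ 2 / 2.
Proof.
by rewrite /sqdist => /edge_neq/(sum_avg_step (fun _ x => (x - c) ^+ 2) w) ->; field.
Qed.

Lemma l1norm_avg_step_le (c : R) p w : p \in E ->
  l1norm (fun k => avg_step p w k - c) <= l1norm (fun k => w k - c).
Proof.
rewrite /l1norm => /edge_neq/(sum_avg_step (fun _ x => `|x - c|) w) ->.
have : `|(w p.1 + w p.2) / 2 - c| <= (`|w p.1 - c| + `|w p.2 - c|) / 2.
  have -> : (w p.1 + w p.2) / 2 - c = ((w p.1 - c) + (w p.2 - c)) / 2 by field.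
  by rewrite normrM normfV normr_nat ler_pM2r ?invr_gt0 ?ltr0n // ler_normD.
lra.
Qed.

Lemma norm_avg_step_le b p (w : 'I_N -> R) :
  (forall j, `|w j| <= b) -> forall j, `|avg_step p w j| <= b.
Proof.
move=> wb j; rewrite /avg_step; case: ifP => _; last exact: wb.
rewrite normrM normfV normr_nat ler_pdivrMr //.
by apply: le_trans (ler_normD _ _) _; have := wb p.1; have := wb p.2; lra.
Qed.

Lemma centered_step_invariant c r : step_invariant
  (fun w => \sum_k (w k - c) = 0 /\ l1norm (fun k => w k - c) <= r).
Proof.
move=> p w pE [sum_w l1_w]; split; last exact: le_trans (l1norm_avg_step_le c w pE) l1_w.
by rewrite sumrB sum_avg_step_id // -sumrB.
Qed.

Lemma dirichlet_subr c (w : 'I_N -> R) : dirichlet (fun k => w k - c) = dirichlet w.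
Proof. by apply: eq_bigr => p _; congr (_ ^+ 2); ring. Qed.

Lemma l1norm_le_sqdist a c (w : 'I_N -> R) : 0 < a ->
  l1norm (fun k => w k - c) <= a * sqdist c w + N%:R / (4 * a).
Proof.
move=> a0; have -> : N%:R / (4 * a) = \sum_(i < N) (4 * a)^-1.
  by rewrite sumr_const card_ord mulr_natl.
rewrite /l1norm /sqdist mulr_sumr -big_split; apply: ler_sum => i _.
exact: norm_le_sqr.
Qed.

Lemma sum_edges_sym (F : 'I_N -> 'I_N -> R) : symmetric adj ->
  (forall i j, F i j = F j i) -> (forall i, F i i = 0) ->
  2 * \sum_(p in E) F p.1 p.2 = \sum_i \sum_j (if adj i j then F i j else 0).
Proof.
move=> adj_sym F_sym F_diag.
pose G (i j : 'I_N) := if (i < j)%N && adj i j then F i j else 0.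
have sumE : \sum_(p in E) F p.1 p.2 = \sum_i \sum_j G i j.
  by rewrite pair_big /= big_mkcond /=; apply: eq_bigr => p _; rewrite inE.
have sym_split i j : (if adj i j then F i j else 0) = G i j + G j i.
  rewrite /G adj_sym F_sym; case: (ltngtP i j) => [_|_|/val_inj ->] /=;
    by case: (adj j _); rewrite ?addr0 ?add0r ?F_diag.
under [RHS]eq_bigr do under eq_bigr do rewrite sym_split.
rewrite sumE; under [RHS]eq_bigr do rewrite big_split /=.
by rewrite big_split /= [X in _ = _ + X]exchange_big /=; ring.
Qed.

Lemma exp_after_add t1 t2 (f : ('I_N -> R) -> R) v :
  exp_after adj (t1 + t2) f v = exp_after adj t1 (exp_after adj t2 f) v.
Proof.
elim: t1 v => [|t IH] v //=.
by congr (_ * _); apply: eq_bigr => p _; rewrite IH.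
Qed.

Lemma exp_after_le (P : ('I_N -> R) -> Prop) (f g : ('I_N -> R) -> R) :
  step_invariant P ->
  (forall w, P w -> f w <= g w) ->
  forall t w, P w -> exp_after adj t f w <= exp_after adj t g w.
Proof.
move=> invP fg; elim=> [|t IH] w Pw /=; first exact: fg.
rewrite ler_wpM2l ?invr_ge0 //.
by apply: ler_sum => p pE; apply/IH/invP.
Qed.

Hypothesis edges_gt0 : (0 < #|E|)%N.

Lemma mean_edges_affine (X : 'I_N * 'I_N -> R) a b :
  m^-1 * \sum_(p in E) (a * X p + b) = a * (m^-1 * \sum_(p in E) X p) + b.
Proof.
have m_neq0 : m != 0 by rewrite pnatr_eq0 -lt0n.
by rewrite big_split /= -mulr_sumr sumr_const -mulr_natr; field.
Qed.

Lemma exp_after_affine t (f : ('I_N -> R) -> R) a b v :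
  exp_after adj t (fun w => a * f w + b) v = a * exp_after adj t f v + b.
Proof.
elim: t v => [|t IH] v //=.
by under eq_bigr do rewrite IH; rewrite mean_edges_affine.
Qed.

Lemma exp_after_contract (P : ('I_N -> R) -> Prop) (f : ('I_N -> R) -> R) rho M :
  0 <= rho -> step_invariant P ->
  (forall w, P w ->
     m^-1 * \sum_(p in E) f (avg_step p w) <= rho * f w + (1 - rho) * M) ->
  forall t w, P w -> exp_after adj t f w <= rho ^+ t * (f w - M) + M.
Proof.
move=> rho0 invP drift; elim=> [|t IH] w Pw /=; first by rewrite expr0 mul1r subrK.
apply: (@le_trans _ _
  (m^-1 * \sum_(p in E) (rho ^+ t * f (avg_step p w) + (M - rho ^+ t * M)))).
  rewrite ler_wpM2l ?invr_ge0 //; apply: ler_sum => p pE.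
  by have := IH _ (invP _ _ pE Pw); rewrite mulrBr addrA addrAC.
rewrite mean_edges_affine exprSr.
have := ler_wpM2l (exprn_ge0 t rho0) (drift w Pw); nra.
Qed.

Lemma exp_after_linear_drift (P : ('I_N -> R) -> Prop) (f : ('I_N -> R) -> R) d :
  step_invariant P ->
  (forall w, P w -> f w - d <= m^-1 * \sum_(p in E) f (avg_step p w)) ->
  forall t w, P w -> f w - t%:R * d <= exp_after adj t f w.
Proof.
move=> invP drift; elim=> [|t IH] w Pw /=; first by rewrite mul0r subr0.
apply: (@le_trans _ _ (m^-1 * \sum_(p in E) (1 * f (avg_step p w) + - (t%:R * d)))).
  by rewrite mean_edges_affine mul1r -natr1; have := drift w Pw; lra.
rewrite ler_wpM2l ?invr_ge0 //; apply: ler_sum => p pE.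
by rewrite mul1r; apply: IH; apply: invP.
Qed.

Lemma mean_sqdist_avg_step c (w : 'I_N -> R) :
  m^-1 * \sum_(p in E) sqdist c (avg_step p w) = sqdist c w - (2 * m)^-1 * dirichlet w.
Proof.
under eq_bigr => p pE do rewrite sqdist_avg_step //.
have m_neq0 : m != 0 by rewrite pnatr_eq0 -lt0n.
by rewrite sumrB sumr_const -mulr_suml -mulr_natr /dirichlet; field.
Qed.

Lemma exp_after_sqdist_decay (P : ('I_N -> R) -> Prop) c a b :
  step_invariant P -> 0 < a <= 2 * m -> 0 <= b ->
  (forall w, P w -> a * sqdist c w - b <= dirichlet w) ->
  forall t w, P w ->
    (exp_after adj t (sqdist c) w - b / a) * (1 + t%:R * (a / (2 * m))) <= sqdist c w.
Proof.
move=> invP /andP[a0 a_le] b0 gap t w Pw.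
have m0 : 0 < m by rewrite ltr0n.
have x_range : 0 <= a / (2 * m) <= 1 by rewrite divr_ge0 ?ler_pdivrMr ?mul1r //=; lra.
have /andP[x0 x1] := x_range.
have rho0 : 0 <= 1 - a / (2 * m) by rewrite subr_ge0.
have drift v : P v -> m^-1 * \sum_(p in E) sqdist c (avg_step p v) <=
    (1 - a / (2 * m)) * sqdist c v + (1 - (1 - a / (2 * m))) * (b / a).
  move=> Pv; rewrite mean_sqdist_avg_step.
  have -> : (1 - (1 - a / (2 * m))) * (b / a) = (2 * m)^-1 * b by field; lra.
  have := gap v Pv; have : 0 < (2 * m)^-1 by rewrite invr_gt0; lra.
  nra.
have S0 : 0 <= sqdist c w by rewrite /sqdist sumr_ge0 // => i _; exact: sqr_ge0.
have q0 : 0 <= b / a := divr_ge0 b0 (ltW a0).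
have y0 : 0 <= 1 + t%:R * (a / (2 * m)) := addr_ge0 ler01 (mulr_ge0 (ler0n _ _) x0).
have contract := exp_after_contract rho0 invP drift t Pw.
have bernoulli := expr1B_mulD_le1 t x_range.
set r := (1 - a / (2 * m)) ^+ t in contract bernoulli.
have r0 : 0 <= r := exprn_ge0 t rho0.
apply: (@le_trans _ _ (r * (sqdist c w - b / a) * (1 + t%:R * (a / (2 * m))))).
  by rewrite ler_wpM2r //; lra.
have := ler_wpM2l S0 bernoulli; have := mulr_ge0 q0 (mulr_ge0 r0 y0); lra.
Qed.

End AveragingProcess.

Section Dumbbell.
Variables (R : realType) (k : nat).
Local Notation n := k.+1.
Local Notation T := 'I_(n + n).
Local Notation adj := (dumbbell_adj n).
Local Notation E := (edges adj).
Local Notation m := (#|edges adj|%:R : R).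

Definition in_left (i : T) : bool := (i < n)%N.
Definition bridge_l : T := lshift n ord_max.
Definition bridge_r : T := rshift n ord_max.

Lemma in_left_lshift (i : 'I_n) : in_left (lshift n i).
Proof. by rewrite /in_left /= ltn_ord. Qed.

Lemma in_left_rshift (i : 'I_n) : in_left (rshift n i) = false.
Proof. by rewrite /in_left /= ltnNge leq_addr. Qed.

Lemma bridge_neq : bridge_l != bridge_r.
Proof. by rewrite -val_eqE /= ltn_eqF // addSn ltnS leq_addl. Qed.

Lemma dumbbell_adjE i j : adj i j = (i != j) &&
  [|| in_left i == in_left j, (i == bridge_l) && (j == bridge_r)
    | (i == bridge_r) && (j == bridge_l)].
Proof.
have l_end x : (val x == n.-1) = (x == bridge_l) by rewrite -val_eqE.
have r_end x : (val x == (n + n).-1) = (x == bridge_r).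
  have -> : (n + n).-1 = (n + k)%N by rewrite addnS.
  by rewrite -val_eqE.
by rewrite /dumbbell_adj !l_end !r_end [(j == bridge_l) && _]andbC.
Qed.

Lemma dumbbell_adj_sym : symmetric adj.
Proof.
move=> i j; rewrite !dumbbell_adjE eq_sym [in_left j == _]eq_sym; congr (_ && _).
by case: (i == bridge_l); case: (i == bridge_r); case: (j == bridge_l);
  case: (j == bridge_r); rewrite /= ?orbF ?orbT.
Qed.

Lemma bridge_in_edges : (bridge_l, bridge_r) \in E.
Proof. by rewrite inE /= dumbbell_adjE bridge_neq !eqxx orbT /= addSn ltnS leq_addl. Qed.

Lemma dumbbell_edges_gt0 : (0 < #|E|)%N.
Proof. by apply/card_gt0P; exists (bridge_l, bridge_r); exact: bridge_in_edges. Qed.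

Lemma dumbbell_edgeP p : p \in E ->
  in_left p.1 = in_left p.2 \/ p = (bridge_l, bridge_r).
Proof.
case: p => i j; rewrite inE /= dumbbell_adjE => /and3P[lt_ij _].
case/or3P => [/eqP|/andP[/eqP-> /eqP->]|/andP[/eqP ir /eqP jl]]; [by left|by right|].
by move: lt_ij; rewrite ir jl /= ltnNge leq_addl.
Qed.

Lemma sum_dumbbell_adj (F : T -> T -> R) : (forall i, F i i = 0) ->
  \sum_i \sum_j (if adj i j then F i j else 0) =
    \sum_(i < n) \sum_(j < n) F (lshift n i) (lshift n j)
  + \sum_(i < n) \sum_(j < n) F (rshift n i) (rshift n j)
  + F bridge_l bridge_r + F bridge_r bridge_l.
Proof.
move=> F_diag.
have split_adj i j : (if adj i j then F i j else 0) =
    (if in_left i == in_left j then F i j else 0)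
  + (if (i == bridge_l) && (j == bridge_r) then F i j else 0)
  + (if (i == bridge_r) && (j == bridge_l) then F i j else 0).
  have [-> | ne_ij] := eqVneq i j; first by rewrite F_diag !if_same !addr0.
  have [/andP[/eqP-> /eqP->] | not_lr] := boolP ((i == bridge_l) && (j == bridge_r)).
    by rewrite dumbbell_adjE bridge_neq !eqxx in_left_lshift in_left_rshift
      eq_sym (negbTE bridge_neq) /= addr0 add0r.
  have [/andP[/eqP-> /eqP->] | not_rl] := boolP ((i == bridge_r) && (j == bridge_l)).
    by rewrite dumbbell_adjE eq_sym bridge_neq !eqxx in_left_lshift in_left_rshift
      (negbTE bridge_neq) /= !add0r.
  by rewrite dumbbell_adjE ne_ij (negbTE not_lr) (negbTE not_rl) /= !orbF !addr0.
have pick a b (X : T -> T -> R) :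
    \sum_i \sum_j (if (i == a) && (j == b) then X i j else 0) = X a b.
  rewrite (bigD1 a) //= [X in _ + X]big1 ?addr0 => [|i ia];
    last by rewrite big1 // (negbTE ia).
  by rewrite eqxx -big_mkcond big_pred1_eq.
under eq_bigr do under eq_bigr do rewrite split_adj.
under eq_bigr do rewrite !big_split /=.
rewrite !big_split /= !pick big_split_ord; congr (_ + _ + _ + _);
  apply: eq_bigr => i _; rewrite big_split_ord /=.
- rewrite in_left_lshift [X in _ + X]big1 ?addr0 => [|j _]; last by rewrite in_left_rshift.
  by apply: eq_bigr => j _; rewrite in_left_lshift.
- rewrite in_left_rshift [X in X + _]big1 ?add0r => [|j _]; last by rewrite in_left_lshift.
  by apply: eq_bigr => j _; rewrite in_left_rshift.
Qed.

Lemma sum_dumbbell_edges (F : T -> T -> R) :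
  (forall i j, F i j = F j i) -> (forall i, F i i = 0) ->
  2 * \sum_(p in E) F p.1 p.2 =
    \sum_(i < n) \sum_(j < n) F (lshift n i) (lshift n j)
  + \sum_(i < n) \sum_(j < n) F (rshift n i) (rshift n j) + 2 * F bridge_l bridge_r.
Proof.
move=> F_sym F_diag.
rewrite sum_edges_sym ?sum_dumbbell_adj //; last exact: dumbbell_adj_sym.
by rewrite [F bridge_r _]F_sym; ring.
Qed.

Lemma card_dumbbell_edges : m = n%:R * k%:R + 1.
Proof.
pose F (i j : T) : R := if i == j then 0 else 1.
have sumE : \sum_(p in E) F p.1 p.2 = m.
  by rewrite -sum1_card natr_sum; apply: eq_bigr => p /edge_neq/negbTE; rewrite /F => ->.
have clique (f : 'I_n -> T) : injective f ->
    \sum_(i < n) \sum_(j < n) F (f i) (f j) = n%:R * k%:R.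
  move=> f_inj; have row i : \sum_(j < n) F (f i) (f j) = k%:R.
    rewrite (eq_bigr (fun j => 1 - (if j == i then 1 else 0))) => [|j _]; last first.
      by rewrite /F (inj_eq f_inj) eq_sym; case: (j == i); rewrite ?subrr ?subr0.
    by rewrite sumrB sumr_const card_ord -big_mkcond big_pred1_eq -natr1 addrK.
  by rewrite (eq_bigr _ (fun i _ => row i)) sumr_const card_ord mulr_natl.
have F_sym i j : F i j = F j i by rewrite /F eq_sym.
have F_diag i : F i i = 0 by rewrite /F eqxx.
have := sum_dumbbell_edges F_sym F_diag.
by rewrite sumE !clique /F ?(negbTE bridge_neq); [lra|exact: rshift_inj|exact: lshift_inj].
Qed.

Lemma dirichlet_dumbbell (y : T -> R) :
  dirichlet adj y = n%:R * \sum_k y k ^+ 2 - (\sum_(i < n) y (lshift n i)) ^+ 2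
    - (\sum_(i < n) y (rshift n i)) ^+ 2 + (y bridge_l - y bridge_r) ^+ 2.
Proof.
have F_sym i j : (y i - y j) ^+ 2 = (y j - y i) ^+ 2 by ring.
have F_diag i : (y i - y i) ^+ 2 = 0 by rewrite subrr expr0n.
have := sum_dumbbell_edges F_sym F_diag.
by rewrite !sum_sum_sqr_sub big_split_ord /= /dirichlet; lra.
Qed.

Lemma poincare_dumbbell (y : T -> R) : \sum_k y k = 0 ->
  \sum_k y k ^+ 2 <= 3 * n%:R * dirichlet adj y.
Proof.
rewrite dirichlet_dumbbell !big_split_ord /=.
set SL := \sum_(i < n) y (lshift n i); set SR := \sum_(i < n) y (rshift n i).
set QL := \sum_(i < n) _; set QR := \sum_(i < n) _ => sum0.
have n0 : (0 : R) < n%:R by rewrite ltr0n.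
set a := SL / n%:R.
have SL_a : SL = n%:R * a by rewrite /a mulrC divfK ?gt_eqF.
have SR_a : SR = - (n%:R * a) by rewrite -SL_a; lra.
have dev_l : (y bridge_l - a) ^+ 2 <= QL - SL ^+ 2 / n%:R :=
  sqr_sub_mean_le (fun i => y (lshift n i)) ord_max.
have dev_r : (y bridge_r - SR / n%:R) ^+ 2 <= QR - SR ^+ 2 / n%:R :=
  sqr_sub_mean_le (fun i => y (rshift n i)) ord_max.
have [sq_l sq_r] : SL ^+ 2 / n%:R = n%:R * a ^+ 2 /\ SR ^+ 2 / n%:R = n%:R * a ^+ 2.
  by rewrite SR_a SL_a; split; field; lra.
have mean_r : SR / n%:R = - a by rewrite SR_a; field; lra.
rewrite sq_l in dev_l; rewrite mean_r sq_r opprK in dev_r.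
set g := y bridge_l - y bridge_r.
(* The gap [2 a] between the two clique means is crossed in three steps: from the
   left mean to [bridge_l], along the bridge, and from [bridge_r] to the right mean. *)
have path : 4 * a ^+ 2 <= 3 * (g ^+ 2 + (y bridge_l - a) ^+ 2 + (y bridge_r + a) ^+ 2).
  rewrite -subr_ge0.
  have -> : 3 * (g ^+ 2 + (y bridge_l - a) ^+ 2 + (y bridge_r + a) ^+ 2) - 4 * a ^+ 2 =
    (g + (y bridge_l - a)) ^+ 2 + (g - (y bridge_r + a)) ^+ 2
    + ((y bridge_l - a) + (y bridge_r + a)) ^+ 2 by rewrite /g; ring.
  by rewrite !addr_ge0 ?sqr_ge0.
have n1 : (1 : R) <= n%:R by rewrite ler1n.
have := sqr_ge0 g; have := sqr_ge0 (y bridge_l - a); have := sqr_ge0 (y bridge_r + a).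
rewrite SL_a SR_a; nra.
Qed.

Lemma dirichlet_dumbbell_ge (y : T -> R) : \sum_k y k = 0 ->
  n%:R * \sum_k y k ^+ 2 - l1norm y ^+ 2 / 2 <= dirichlet adj y.
Proof.
move=> sum0; rewrite dirichlet_dumbbell.
set SL := \sum_(i < n) y (lshift n i); set SR := \sum_(i < n) y (rshift n i).
have SR_SL : SR = - SL.
  by apply/eqP; rewrite -subr_eq0 opprK addrC; move: sum0; rewrite big_split_ord => /eqP.
have : `|SL| + `|SR| <= l1norm y.
  by rewrite /l1norm big_split_ord; apply: lerD; apply: ler_norm_sum.
rewrite SR_SL normrN sqrrN -[SL ^+ 2]real_normK ?num_real //.
have := sqr_ge0 (y bridge_l - y bridge_r); have := normr_ge0 SL; nra.
Qed.

Definition cut (w : T -> R) : R := \sum_j (if in_left j then w j else - w j).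

Lemma cut_avg_step p (w : T -> R) : p \in E ->
  cut (avg_step p w) =
    cut w - (if p == (bridge_l, bridge_r) then w bridge_l - w bridge_r else 0).
Proof.
move=> pE; rewrite /cut.
rewrite (sum_avg_step (fun j x => if in_left j then x else - x) w (edge_neq pE)) /=.
case: (dumbbell_edgeP pE) => [same | ->].
  have -> : (p == (bridge_l, bridge_r)) = false.
    by apply/eqP => bridge; move: same; rewrite bridge /= in_left_lshift in_left_rshift.
  by rewrite same; case: (in_left p.2); lra.
by rewrite eqxx in_left_lshift in_left_rshift; lra.
Qed.

Lemma dumbbell_cube_bounds : n%:R ^+ 3 <= 2 * (n%:R * m) /\ n%:R * m <= n%:R ^+ 3.
Proof.
rewrite card_dumbbell_edges -natr1; have : (0 : R) <= k%:R by [].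
by split; nra.
Qed.

Local Notation centered c w :=
  (\sum_k (w k - c) = 0 /\ l1norm (fun k => w k - c) <= 2).

Lemma sqdist_le4 c (w : T -> R) : centered c w -> sqdist c w <= 4.
Proof.
case=> _ l1_le2; apply: le_trans (sum_sqr_le_sqr_sum_norm _) _.
have : 0 <= l1norm (fun k => w k - c) by apply: sumr_ge0.
by rewrite /l1norm in l1_le2 *; nra.
Qed.

Lemma dumbbell_sqdist_warmup c (v : T -> R) : centered c v ->
  exp_after adj (2 * #|E|) (sqdist c) v <= 6 / n%:R.
Proof.
move=> v_centered.
have n0 : (0 : R) < n%:R by rewrite ltr0n.
have n_le_2m : (n%:R : R) <= 2 * m.
  by rewrite card_dumbbell_edges -natr1; have : (0 : R) <= k%:R by []; nra.
have gap w : centered c w -> n%:R * sqdist c w - 2 <= dirichlet adj w.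
  case=> sum0 l1_le2; have := dirichlet_dumbbell_ge sum0; rewrite dirichlet_subr.
  have : 0 <= l1norm (fun k => w k - c) by apply: sumr_ge0.
  rewrite /sqdist; nra.
have a_range : (0 : R) < n%:R <= 2 * m by apply/andP.
have := exp_after_sqdist_decay dumbbell_edges_gt0
  (centered_step_invariant (c := c) (r := 2)) a_range (ler0n R 2) gap (2 * #|E|) v_centered.
rewrite (_ : (2 * #|E|)%:R * (n%:R / (2 * m)) = n%:R); last by rewrite natrM; field; lra.
have := sqdist_le4 v_centered; set q := 2 / n%:R.
have qn : q * n%:R = 2 by rewrite /q divfK ?gt_eqF.
rewrite ler_pdivlMr //; nra.
Qed.

Lemma dumbbell_sqdist_contraction c K (v : T -> R) : centered c v ->
  exp_after adj (6 * n * #|E| * K) (sqdist c) v * (1 + K%:R) <= sqdist c v.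
Proof.
move=> v_centered.
have n0 : (0 : R) < n%:R by rewrite ltr0n.
have m1 : (1 : R) <= m by rewrite ler1n dumbbell_edges_gt0.
have gap w : centered c w -> (3 * n%:R)^-1 * sqdist c w - 0 <= dirichlet adj w.
  case=> sum0 _; rewrite subr0 ler_pdivrMl ?mulr_gt0 // -(dirichlet_subr _ c).
  exact: (poincare_dumbbell sum0).
have n1 : (1 : R) <= n%:R by rewrite ler1n.
have a_range : (0 : R) < (3 * n%:R)^-1 <= 2 * m.
  rewrite invr_gt0 mulr_gt0 //=; apply: (@le_trans _ _ 1); last lra.
  by rewrite invf_le1 ?mulr_gt0 //; lra.
have := exp_after_sqdist_decay dumbbell_edges_gt0
  (centered_step_invariant (c := c) (r := 2)) a_range (lexx 0) gap
  (6 * n * #|E| * K) v_centered.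
rewrite mul0r subr0 (_ : _ * (_ / _) = K%:R) //.
by rewrite !natrM; field; lra.
Qed.

Lemma mean_centered (v : T -> R) : l1norm v = 1 -> centered (mean v) v.
Proof.
move=> l1_v; have N0 : ((n + n)%:R : R) != 0 by rewrite pnatr_eq0 addnS.
have mean_mul : mean v * (n + n)%:R = \sum_k v k by rewrite /mean divfK.
split; first by rewrite sumrB sumr_const card_ord -mulr_natr mean_mul subrr.
apply: (@le_trans _ _ (\sum_k (`|v k| + `|mean v|))).
  by apply: ler_sum => j _; apply: ler_normB.
have : `|mean v| * (n + n)%:R <= 1.
  by rewrite -[X in _ * X]normr_nat -normrM mean_mul -l1_v ler_norm_sum.
by rewrite big_split /= sumr_const card_ord -mulr_natr -/(l1norm v) l1_v; lra.
Qed.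

Lemma dumbbell_sqdist_mixing c K (v : T -> R) : centered c v ->
  exp_after adj (2 * #|E| + 6 * n * #|E| * K) (sqdist c) v <= (1 + K%:R)^-1 * (6 / n%:R).
Proof.
move=> v_centered; have K1_gt0 : (0 : R) < 1 + K%:R by rewrite ltr_pwDl.
rewrite exp_after_add; apply: (@le_trans _ _
  (exp_after adj (2 * #|E|) (fun w => (1 + K%:R)^-1 * sqdist c w + 0) v)).
  apply: exp_after_le (centered_step_invariant (c := c) (r := 2)) _ _ _ v_centered.
  move=> w w_centered; rewrite addr0 mulrC ler_pdivlMr //.
  exact: dumbbell_sqdist_contraction.
rewrite exp_after_affine ?addr0 ?dumbbell_edges_gt0 // ler_wpM2l ?invr_ge0 ?(ltW K1_gt0) //.
exact: dumbbell_sqdist_warmup.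
Qed.

Lemma dumbbell_mixed_upper (eps : R) K : 0 < eps -> 12 / eps ^+ 2 < K%:R ->
  eps_mixed adj eps (2 * #|E| + 6 * n * #|E| * K).
Proof.
move=> eps0 K_gt v l1_v; rewrite /exp_l1_dist; set c := mean v.
have n0 : (0 : R) < n%:R by rewrite ltr0n.
have K_ge0 : (0 : R) <= K%:R by [].
apply: (@le_trans _ _ (exp_after adj (2 * #|E| + 6 * n * #|E| * K)
  (fun w => n%:R / eps * sqdist c w + eps / 2) v)).
  apply: (exp_after_le (P := fun _ => True)) => // w _.
  have -> : eps / 2 = (n + n)%:R / (4 * (n%:R / eps)) by rewrite natrD; field; lra.
  exact: l1norm_le_sqdist (divr_gt0 n0 eps0).
rewrite exp_after_affine ?dumbbell_edges_gt0 //.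
have := ler_wpM2l (ltW (divr_gt0 n0 eps0)) (dumbbell_sqdist_mixing K (mean_centered l1_v)).
have -> : n%:R / eps * ((1 + K%:R)^-1 * (6 / n%:R)) = 6 / (eps * (1 + K%:R)).
  by field; lra.
have K_big : 12 < K%:R * eps ^+ 2 by rewrite -ltr_pdivrMr // exprn_gt0.
have : 6 / (eps * (1 + K%:R)) <= eps / 2 by rewrite ler_pdivrMr ?mulr_gt0 //; nra.
lra.
Qed.

Lemma exp_after_cut_ge t (w : T -> R) : (forall j, `|w j| <= n%:R^-1 / 2) ->
  `|cut w| - t%:R * (n%:R * m)^-1 <= exp_after adj t (fun v => `|cut v|) w.
Proof.
have n0 : (0 : R) < n%:R by rewrite ltr0n.
have m0 : 0 < m by rewrite ltr0n dumbbell_edges_gt0.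
pose bounded (v : T -> R) := forall j, `|v j| <= n%:R^-1 / 2.
apply: (exp_after_linear_drift dumbbell_edges_gt0 (P := bounded)) _ _ t w.
  by move=> p v _ v_bounded; exact: norm_avg_step_le.
move=> v v_bounded.
have step_ge p : p \in E -> `|cut v| -
    (if p == (bridge_l, bridge_r) then n%:R^-1 else 0) <= `|cut (avg_step p v)|.
  move=> pE; rewrite cut_avg_step //; case: (p == _); last by rewrite !subr0.
  have gap : `|v bridge_l - v bridge_r| <= (n%:R : R)^-1.
    rewrite [X in _ <= X]splitr; apply: le_trans (ler_normB _ _) _.
    exact: lerD (v_bounded _) (v_bounded _).
  by apply: le_trans (lerB_dist _ _); rewrite lerD2l lerN2.
have := ler_sum (index_enum _) step_ge; rewrite sumrB sumr_const -big_mkcondr /=.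
rewrite (big_pred1 (bridge_l, bridge_r)) => [|p]; last first.
  by rewrite andb_idl // => /eqP->; exact: bridge_in_edges.
rewrite ler_pdivlMl // mulrBr (_ : m * (n%:R * m)^-1 = n%:R^-1); last by field; lra.
by rewrite mulr_natl.
Qed.

Definition cut_vector (j : T) : R := if in_left j then n%:R^-1 / 2 else - (n%:R^-1 / 2).

Lemma norm_cut_vector j : `|cut_vector j| = n%:R^-1 / 2.
Proof.
by rewrite /cut_vector; case: (in_left j); rewrite ?normrN gtr0_norm ?divr_gt0 ?invr_gt0.
Qed.

Lemma l1norm_cut_vector : l1norm cut_vector = 1.
Proof.
rewrite /l1norm (eq_bigr _ (fun j _ => norm_cut_vector j)) sumr_const card_ord.
rewrite -(mulr_natl (n%:R^-1 / 2) (n + n)) natrD; field.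
by rewrite addrC natr1 pnatr_eq0.
Qed.

Lemma mean_cut_vector : mean cut_vector = 0.
Proof.
rewrite /mean big_split_ord /= /cut_vector.
under eq_bigr do rewrite in_left_lshift.
under [X in _ + X]eq_bigr do rewrite in_left_rshift.
by rewrite sumrN subrr mul0r.
Qed.

Lemma cut_cut_vector : cut cut_vector = 1.
Proof.
rewrite -l1norm_cut_vector; apply: eq_bigr => j _; rewrite norm_cut_vector /cut_vector.
by case: (in_left j); rewrite ?opprK.
Qed.

Lemma dumbbell_mixed_lower (eps : R) t :
  eps_mixed adj eps t -> (1 - eps) * (n%:R * m) <= t%:R.
Proof.
move=> mixed; have := mixed _ l1norm_cut_vector.
have cut_le_l1 w : `|cut w| <= l1norm (fun j => w j - mean cut_vector).
  rewrite mean_cut_vector; apply: le_trans (ler_norm_sum _ _ _) _.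
  by apply: ler_sum => j _; case: (in_left j); rewrite ?normrN subr0.
have := exp_after_le (adj := adj) (P := fun _ => True) (fun _ _ _ _ => I)
  (fun w _ => cut_le_l1 w) t (w := cut_vector) I.
have bounded j : `|cut_vector j| <= n%:R^-1 / 2 by rewrite norm_cut_vector.
have := exp_after_cut_ge t bounded.
rewrite cut_cut_vector normr1 /exp_l1_dist => drift_le trans_le mixed_v.
have := le_trans drift_le (le_trans trans_le mixed_v).
by rewrite -ler_pdivlMr ?mulr_gt0 ?ltr0n ?dumbbell_edges_gt0 // !lerBlDr addrC.
Qed.

End Dumbbell.

Unset Implicit Arguments.

Theorem theorem6 (R : realType) (eps : R) :
  0 < eps < 1 ->
  exists c C : R, [/\ 0 < c, c <= C &
    forall n : nat, (1 <= n)%N ->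
      exists t : nat, is_t_eps_1 (dumbbell_adj n) eps t /\
        c * n%:R ^+ 3 <= t%:R <= C * n%:R ^+ 3].
Proof.
move=> /andP[eps0 eps1].
pose K := Num.Def.archi_bound (12 / eps ^+ 2).
have K_gt : 12 / eps ^+ 2 < K%:R by rewrite archi_boundP // divr_ge0 ?exprn_ge0 ?ltW.
have K_ge0 : (0 : R) <= K%:R by [].
exists ((1 - eps) / 2), (2 + 6 * K%:R); split; [lra | lra |].
case=> [//|k] _.
have mixed := dumbbell_mixed_upper (k := k) eps0 K_gt.
pose mixed_at t := `[< eps_mixed (dumbbell_adj k.+1) eps t >].
have [t /asboolP mixed_t t_min] := ex_minnP (ex_intro mixed_at _ (asboolT mixed)).
exists t; split; first by split=> // s /asboolP /t_min.
have lower := dumbbell_mixed_lower mixed_t.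
have upper := t_min _ (asboolT mixed); rewrite -(ler_nat R) natrD !natrM in upper.
have [cube_le cube_ge] := dumbbell_cube_bounds R k.
have m_ge0 : (0 : R) <= #|edges (dumbbell_adj k.+1)|%:R by [].
have n_ge1 : (1 : R) <= k.+1%:R by rewrite ler1n.
have eps_le1 : 0 <= 1 - eps by lra.
apply/andP; split; first nra.
have := ler_wpM2l K_ge0 cube_ge; have := ler_wpM2r m_ge0 n_ge1; nra.
Qed.
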